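(* For a $*$-ring $R$ the following are equivalent: (1) $R$ is a generalized p.q.-Baer $*$-ring; (2) $R$ has a unity, and for every $x\in R$ there exist a central projection $e$ and $n\in\mathbb N$ such that $r_R((xR)^n)=r_R((eR)^n)$.
   Context: A $*$-ring is a ring with an involution; a projection is $e$ with $e=e^*=e^2$. $r_R(S)=\{a\in R: sa=0\ \forall s\in S\}$. $R$ is a generalized p.q.-Baer $*$-ring if for every $x\in R$ there are $n\in\mathbb N$ and a projection $e$ with $r_R((xR)^n)=eR$ (equivalently, for every principal ideal $I$, $r_R(I^n)=eR$ for some $n$ and projection $e$). *)

(* A *-ring is modelled as an additive group V (zmodType)
   with an associative, bi-distributive multiplication [mul] (NOT assumed
   unital: the existence of a unity is part of the theorem's conclusion)
   and an involution [star]. *)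
From mathcomp Require Import all_boot all_algebra.
Set Implicit Arguments. Unset Strict Implicit. Unset Printing Implicit Defensive.
Import GRing.Theory.
Local Open Scope ring_scope.

Section StarRing.
Variable V : zmodType.
Variables (mul : V -> V -> V) (star : V -> V).

Definition is_star_ring : Prop :=
  [/\ associative mul,
      left_distributive mul +%R
    & right_distributive mul +%R] /\
  [/\ involutive star,
      (forall x y, star (x + y) = star x + star y)
    & (forall x y, star (mul x y) = mul (star y) (star x))].

Definition has_unity : Prop :=
  exists u : V, forall x, mul u x = x /\ mul x u = x.

Definition is_projection (e : V) : Prop := star e = e /\ mul e e = e.

Definition is_central (e : V) : Prop := forall y, mul e y = mul y e.

Definition rset (x : V) (a : V) : Prop := exists r, a = mul x r.

(* r_R((xR)^n): a is annihilated on the right by every product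
   (x r_1)(x r_2)...(x r_n); the product is bracketed to the right,
   which is harmless as mul is associative. *)
Definition rann_pow (x : V) (n : nat) (a : V) : Prop :=
  forall rs : seq V, size rs = n ->
    foldr (fun r acc => mul (mul x r) acc) a rs = 0.

Definition gen_pq_baer : Prop :=
  forall x : V, exists n : nat, (0 < n)%N /\
    exists e : V, is_projection e /\
      forall a, rann_pow x n a <-> rset e a.

End StarRing.

From Stdlib Require Import Setoid.
From mathcomp Require Import all_boot all_algebra.
Set Implicit Arguments. Unset Strict Implicit. Unset Printing Implicit Defensive.
Import GRing.Theory.
Local Open Scope ring_scope.

(* r_R((xR)^n) is a left ideal, so a projection f with r_R((xR)^n) = fR
   satisfies yf = fyf for all y, and applying * gives fy = fyf: f is central.
   For a central idempotent e and n > 0, both r_R((eR)^n) and (1 - e)R equal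
   {a | ea = 0}, so the conditions pass between f and e := 1 - f.  The unity
   is the projection u with uR = r_R((0R)^n) = R. *)

Lemma morph_add0 (U W : zmodType) (f : U -> W) :
  {morph f : x y / x + y} -> f 0 = 0.
Proof. by move=> fD; apply: (addrI (f 0)); rewrite -fD !addr0. Qed.

Lemma morph_addB (U W : zmodType) (f : U -> W) :
  {morph f : x y / x + y} -> {morph f : x y / x - y}.
Proof.
move=> fD x y; rewrite fD; congr (_ + _).
by apply: (addrI (f y)); rewrite -fD !subrr (morph_add0 fD).
Qed.

Section StarRingTheory.

Variables (V : zmodType) (mul : V -> V -> V) (star : V -> V).
Hypotheses (mulA : associative mul) (mulDl : left_distributive mul +%R)
  (mulDr : right_distributive mul +%R).
Hypotheses (starK : involutive star)
  (starD : forall x y, star (x + y) = star x + star y)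
  (starM : forall x y, star (mul x y) = mul (star y) (star x)).

Lemma mul0x x : mul 0 x = 0.
Proof. exact: morph_add0 (fun a b => mulDl a b x). Qed.

Lemma mulx0 x : mul x 0 = 0.
Proof. exact: morph_add0 (mulDr x). Qed.

Lemma mulBx x y z : mul (x - y) z = mul x z - mul y z.
Proof. exact: (morph_addB (f := mul^~ z) (fun a b => mulDl a b z)). Qed.

Lemma mulxB x y z : mul z (x - y) = mul z x - mul z y.
Proof. exact: (morph_addB (f := mul z) (mulDr z)). Qed.

Lemma rann_pow0 n a : (0 < n)%N -> rann_pow mul 0 n a.
Proof. by case: n => // n _ [|r rs] //= _; rewrite !mul0x. Qed.

Lemma rann_pow_mull x n s a : (0 < n)%N ->
  rann_pow mul x n a -> rann_pow mul x n (mul s a).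
Proof.
move=> n_gt0 xa rs; case/lastP: rs => [|rs r] size_rs; first by rewrite -size_rs in n_gt0.
have := xa (rcons rs (mul r s)); rewrite -size_rs !size_rcons => /(_ erefl).
by rewrite !foldr_rcons (mulA (mul x r)) (mulA x r s).
Qed.

Lemma rann_pow_central_idem e n a :
  mul e e = e -> is_central mul e -> (0 < n)%N ->
  rann_pow mul e n a <-> mul e a = 0.
Proof.
move=> ee ce n_gt0; split => [ea | ea rs size_rs].
  have := ea (nseq n e); rewrite size_nseq => /(_ erefl).
  case: n n_gt0 {ea} => // n _ /=; rewrite ee.
  by elim: n => //= n IHn; rewrite ee mulA ee.
have e_fold rs' : mul e (foldr (fun r acc => mul (mul e r) acc) a rs') = 0.
  by elim: rs' => //= r rs' IH; rewrite !mulA ee (ce r) -mulA IH mulx0.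
case: rs size_rs => [|r rs] /= size_rs; first by rewrite -size_rs in n_gt0.
by rewrite ce -mulA e_fold mulx0.
Qed.

Lemma semicentral_projection_central f :
  is_projection mul star f -> (forall y, mul y f = mul f (mul y f)) ->
  is_central mul f.
Proof.
move=> [sf _] semi_f y.
have fy_fyf : mul f y = mul (mul f y) f.
  by have := f_equal star (semi_f (star y)); rewrite !starM starK sf.
by rewrite fy_fyf -mulA -semi_f.
Qed.

Section Unity.

Variable u : V.
Hypotheses (mul1x : forall x, mul u x = x) (mulx1 : forall x, mul x u = x).

Lemma star_unity : star u = u.
Proof. by have := starM (star u) u; rewrite starK !mulx1 starK. Qed.

Lemma projection_compl p :
  is_projection mul star p -> is_projection mul star (u - p).
Proof.
move=> [sp pp]; split; first by rewrite (morph_addB starD) sp star_unity.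
by rewrite mulBx !mulxB pp !mul1x mulx1 subrr subr0.
Qed.

Lemma central_compl p : is_central mul p -> is_central mul (u - p).
Proof. by move=> cp y; rewrite mulBx mulxB mul1x mulx1 cp. Qed.

Lemma rset_compl p a : mul p p = p -> rset mul (u - p) a <-> mul p a = 0.
Proof.
move=> pp; split => [[r ->] | pa]; first by rewrite mulA mulxB pp mulx1 subrr mul0x.
by exists a; rewrite mulBx pa subr0 mul1x.
Qed.

Lemma rset_compl_rann_pow e n a :
  is_projection mul star e -> is_central mul e -> (0 < n)%N ->
  rset mul (u - e) a <-> rann_pow mul e n a.
Proof. by move=> [_ ee] ce n_gt0; rewrite rset_compl // rann_pow_central_idem. Qed.

End Unity.

Lemma unity_of_left_unity u :
  is_projection mul star u -> (forall x, mul u x = x) -> forall x, mul x u = x.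
Proof.
by move=> [su _] mul1x x; have := f_equal star (mul1x (star x)); rewrite starM starK su.
Qed.

Lemma gen_pq_baer_unity : gen_pq_baer mul star -> has_unity mul.
Proof.
move=> /(_ 0) [n [n_gt0 [u [pu rann0_uR]]]].
have mul1x x : mul u x = x.
  have [r ->] : rset mul u x by apply/rann0_uR/rann_pow0.
  by rewrite mulA (proj2 pu).
by exists u => x; split; [exact: mul1x | exact: unity_of_left_unity].
Qed.

Lemma gen_pq_baer_central u : (forall x, mul u x = x /\ mul x u = x) ->
  gen_pq_baer mul star -> forall x, exists e n,
    [/\ is_projection mul star e, is_central mul e, (0 < n)%N &
        forall a, rann_pow mul x n a <-> rann_pow mul e n a].
Proof.
move=> unit_u G x; have [n [n_gt0 [f [pf rann_fR]]]] := G x.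
have mul1x x' := proj1 (unit_u x'); have mulx1 x' := proj2 (unit_u x').
have semi_f y : mul y f = mul f (mul y f).
  have [r ->] : rset mul f (mul y f).
    by apply/rann_fR/rann_pow_mull/rann_fR => //; exists f; rewrite (proj2 pf).
  by rewrite mulA (proj2 pf).
have cf := semicentral_projection_central pf semi_f.
have pe := projection_compl mul1x mulx1 pf; have ce := central_compl mul1x mulx1 cf.
exists (u - f), n; split => // a.
by rewrite rann_fR -(rset_compl_rann_pow mul1x mulx1 _ pe ce n_gt0) (subKr u).
Qed.

Lemma central_gen_pq_baer u : (forall x, mul u x = x /\ mul x u = x) ->
  (forall x, exists e n,
    [/\ is_projection mul star e, is_central mul e, (0 < n)%N &
        forall a, rann_pow mul x n a <-> rann_pow mul e n a]) ->
  gen_pq_baer mul star.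
Proof.
move=> unit_u central_rann x; have [e [n [pe ce n_gt0 rann_xe]]] := central_rann x.
have mul1x x' := proj1 (unit_u x'); have mulx1 x' := proj2 (unit_u x').
exists n; split => //; exists (u - e); split; first exact: projection_compl.
by move=> a; rewrite rann_xe (rset_compl_rann_pow mul1x mulx1 a pe ce n_gt0).
Qed.

End StarRingTheory.

Theorem mainTheorem7 (V : zmodType) (mul : V -> V -> V) (star : V -> V) :
  is_star_ring mul star ->
  (gen_pq_baer mul star <->
   (has_unity mul /\
    forall x : V, exists e : V, exists n : nat,
      [/\ is_projection mul star e, is_central mul e, (0 < n)%N &
          forall a, rann_pow mul x n a <-> rann_pow mul e n a])).
Proof.
move=> [[mulA mulDl mulDr] [starK starD starM]]; split => [G | [[u unit_u] H]].
- have [u unit_u] := gen_pq_baer_unity mulA mulDl starK starM G.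
  split; first by exists u.
  exact: (gen_pq_baer_central mulA mulDl mulDr starK starD starM unit_u G).
- exact: (central_gen_pq_baer mulA mulDl mulDr starK starD starM unit_u H).
Qed.
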